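(* For any pure state $\ket\Psi\in\mathcal H_A\otimes\mathcal H_B\otimes\mathcal H_C$ (finite-dimensional), $G(A:B:C)_{\ket\Psi}\le S_0(A)+S_2(B)$, where $S_0(A)=\log\operatorname{rank}\rho_A$ and $S_2(B)=-\log\operatorname{tr}\rho_B^2$, with $\rho_A,\rho_B$ the reduced density matrices of $\ket\Psi$.
   Context: For a subsystem $X$ and $\pi\in S_n$, $\pi_X$ permutes the $n$ copies of $\mathcal H_X$ according to $\pi$ and acts trivially otherwise. $\pi^{(1)}=(12)(34)$, $\pi^{(2)}=(13)(24)$, $\pi^{(3)}=(14)(23)\in S_4$; $Z(A:B:C)_{\ket\Psi}=\bra\Psi^{\otimes4}(\pi^{(1)}_A\otimes\pi^{(2)}_B\otimes\pi^{(3)}_C)\ket\Psi^{\otimes4}$ (a positive real number) and $G(A:B:C)_{\ket\Psi}=-\tfrac12\log Z(A:B:C)_{\ket\Psi}$. *)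

From HB Require Import structures.
From mathcomp Require Import all_boot all_order all_algebra all_fingroup.
From mathcomp Require Import all_classical all_reals all_analysis.
From mathcomp Require Import complex.
Set Implicit Arguments. Unset Strict Implicit. Unset Printing Implicit Defensive.
Import Order.TTheory GRing.Theory Num.Theory.
Local Open Scope ring_scope.

Section Tripartite.
Variables (R : realType) (dA dB dC : nat).

(* A (pure) state |Psi> in H_A (x) H_B (x) H_C, with H_X = C^dX, given by its
   coefficients Psi a b c = <a b c | Psi>. *)
Definition state := 'I_dA -> 'I_dB -> 'I_dC -> R[i].

Definition normalized (Psi : state) : Prop :=
  \sum_(a : 'I_dA) \sum_(b : 'I_dB) \sum_(c : 'I_dC) Psi a b c * conjc (Psi a b c) = 1.

Definition rhoA (Psi : state) : 'M[R[i]]_dA :=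
  \matrix_(a, a') \sum_(b : 'I_dB) \sum_(c : 'I_dC) Psi a b c * conjc (Psi a' b c).
Definition rhoB (Psi : state) : 'M[R[i]]_dB :=
  \matrix_(b, b') \sum_(a : 'I_dA) \sum_(c : 'I_dC) Psi a b c * conjc (Psi a b' c).

Definition S0A (Psi : state) : R := ln ((\rank (rhoA Psi))%:R).
(* tr rho_B^2 is real; we take its real part to feed it to ln. *)
Definition S2B (Psi : state) : R := - ln (complex.Re (\tr (rhoB Psi *m rhoB Psi))).

(* <Psi^{(x)4}| pA_A (x) pB_B (x) pC_C |Psi^{(x)4}>, where pi_X sends the basis
   vector |x_1 x_2 x_3 x_4> of H_X^{(x)4} to |x_{pi^-1 1} ... x_{pi^-1 4}>.
   Its matrix element <x|pi_X|y> is 1 iff y = x o pi, whence the formula. *)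
Definition Zperm (pA pB pC : {perm 'I_4}) (Psi : state) : R[i] :=
  \sum_(a : {ffun 'I_4 -> 'I_dA}) \sum_(b : {ffun 'I_4 -> 'I_dB})
   \sum_(c : {ffun 'I_4 -> 'I_dC})
     \prod_(i < 4) (conjc (Psi (a i) (b i) (c i)) *
                    Psi (a (pA i)) (b (pB i)) (c (pC i))).

End Tripartite.

Definition o4 (k : nat) (H : (k < 4)%N) : 'I_4 := Ordinal H.
Arguments o4 k H : clear implicits.
(* pi^(1) = (12)(34), pi^(2) = (13)(24), pi^(3) = (14)(23), with copies 1..4
   numbered 0..3. *)
Definition pi1 : {perm 'I_4} := tperm (o4 0%N isT) (o4 1%N isT) * tperm (o4 2%N isT) (o4 3%N isT).
Definition pi2 : {perm 'I_4} := tperm (o4 0%N isT) (o4 2%N isT) * tperm (o4 1%N isT) (o4 3%N isT).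
Definition pi3 : {perm 'I_4} := tperm (o4 0%N isT) (o4 3%N isT) * tperm (o4 1%N isT) (o4 2%N isT).

Definition Z (R : realType) (dA dB dC : nat) (Psi : state R dA dB dC) : R[i] :=
  Zperm pi1 pi2 pi3 Psi.

(* G(A:B:C) = -1/2 log Z; Z is a positive real number, so we take its real part. *)
Definition G (R : realType) (dA dB dC : nat) (Psi : state R dA dB dC) : R :=
  - (1 / 2) * ln (complex.Re (Z Psi)).

From mathcomp Require Import all_boot all_order all_algebra all_fingroup.
From mathcomp Require Import all_classical all_reals all_analysis.
From mathcomp Require Import complex.
From mathcomp Require Import sesquilinear spectral ring lra.
Set Implicit Arguments. Unset Strict Implicit. Unset Printing Implicit Defensive.
Import Order.TTheory GRing.Theory Num.Theory.
Local Open Scope ring_scope.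

(* Let V be the (A x A) x (C x C) matrix
     V_{(a,a'),(c,c')} = sum_b conj(Psi(a,b,c)) Psi(a',b,c')
   and H = V V^* its Gram matrix. Then tr H = tr rho_B^2, and expanding the
   three permutation operators shows Z(A:B:C) = tr H^2. Cauchy-Schwarz on the
   spectrum of H gives (tr H)^2 <= rank V * tr H^2, while rank V <= (rank rho_A)^2
   because Psi enters V only through the span of its A-rows. *)

Section GramMatrix.
Local Open Scope sesquilinear_scope.
Variable C : numClosedFieldType.

Lemma sqr_sum_le_card_sum_sqr (r : nat) (x : 'I_r -> C) :
  (forall i, x i \is Num.real) -> (\sum_i x i) ^+ 2 <= r%:R * \sum_i x i ^+ 2.
Proof.
move=> x_real.
have AMGM i j : x i * x j *+ 2 <= x i ^+ 2 + x j ^+ 2.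
  rewrite -subr_ge0 -[_ - _]addrAC -sqrrB.
  by apply: real_exprn_even_ge0; rewrite // rpredB.
have -> : (\sum_i x i) ^+ 2 = \sum_i \sum_j x i * x j.
  by rewrite expr2 big_distrl; apply: eq_bigr => i _; rewrite big_distrr.
have sum_AMGM : \sum_(i < r) \sum_(j < r) (x i ^+ 2 + x j ^+ 2)
    = (r%:R * \sum_i x i ^+ 2) *+ 2.
  under eq_bigr => i _ do rewrite big_split /= sumr_const card_ord.
  by rewrite big_split /= sumr_const card_ord sumrMnl mulr2n mulr_natl.
rewrite -(@ler_pMn2r _ 2) // -sum_AMGM -sumrMnl; apply: ler_sum => i _.
by rewrite -sumrMnl; apply: ler_sum => j _.
Qed.

Lemma trmxC_mul (m n p : nat) (A : 'M[C]_(m, n)) (B : 'M[C]_(n, p)) :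
  (A *m B)^t* = B^t* *m A^t*.
Proof. by rewrite trmx_mul map_mxM. Qed.

Section Gram.
Variables (m n : nat) (V : 'M[C]_(m, n)).

Lemma gram_adjoint i j : (V *m V^t*) j i = ((V *m V^t*) i j)^*.
Proof.
rewrite !mxE rmorph_sum; apply: eq_bigr => k _.
by rewrite !mxE rmorphM /= conjCK mulrC.
Qed.

Lemma gram_diag_ge0 i : 0 <= (V *m V^t*) i i.
Proof. by rewrite mxE; apply: sumr_ge0 => j _; rewrite !mxE mul_conjC_ge0. Qed.

Lemma mxtrace_gram : \tr (V *m V^t*) = \sum_i \sum_j V i j * (V i j)^*.
Proof. by apply: eq_bigr => i _; rewrite mxE; apply: eq_bigr => j _; rewrite !mxE. Qed.

Lemma mxtrace_gram_ge0 : 0 <= \tr (V *m V^t*).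
Proof. by rewrite mxtrace_gram; do 2 apply: sumr_ge0 => ? _; exact: mul_conjC_ge0. Qed.

Lemma mxtrace_gram_eq0 : (\tr (V *m V^t*) == 0) = (V == 0).
Proof.
apply/idP/eqP => [|->]; last by rewrite mul0mx mxtrace0.
rewrite mxtrace_gram psumr_eq0 => [/allP V0|i _]; last first.
  by apply: sumr_ge0 => j _; exact: mul_conjC_ge0.
apply/matrixP => i j; rewrite mxE; move/implyP: (V0 i (mem_index_enum _)).
rewrite psumr_eq0 => [/(_ isT)/allP/(_ j (mem_index_enum _))|k _].
  by rewrite mul_conjC_eq0 => /eqP.
exact: mul_conjC_ge0.
Qed.

Lemma mxtrace_gram_sqr_ge0 : 0 <= \tr ((V *m V^t*) *m (V *m V^t*)).
Proof.
apply: sumr_ge0 => i _; rewrite mxE; apply: sumr_ge0 => j _.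
by rewrite [_ j i]gram_adjoint mul_conjC_ge0.
Qed.

End Gram.

Lemma mxrank_gram (m n : nat) (V : 'M[C]_(m, n)) : \rank (V *m V^t*) = \rank V.
Proof.
rewrite -[RHS](mxrank_mul_ker V (V^t*)); set K := (V :&: _)%MS.
suff /eqP-> : K == 0 by rewrite mxrank0 addn0.
rewrite -mxtrace_gram_eq0; have /submxP[D KE] : (K <= V)%MS := capmxSl _ _.
have KV0 : K *m V^t* = 0 by apply/sub_kermxP; exact: capmxSr.
by rewrite {2}KE trmxC_mul mulmxA KV0 mul0mx mxtrace0.
Qed.

Lemma sqr_mxtrace_gram_le_dim (r n : nat) (V : 'M[C]_(r, n)) :
  \tr (V *m V^t*) ^+ 2 <= r%:R * \tr ((V *m V^t*) *m (V *m V^t*)).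
Proof.
set H := V *m V^t*; rewrite /mxtrace.
have H_real i : H i i \is Num.real by exact/ger0_real/gram_diag_ge0.
apply: (le_trans (sqr_sum_le_card_sum_sqr H_real)).
apply: ler_wpM2l; first exact: ler0n.
apply: ler_sum => i _.
rewrite [(H *m H) i i]mxE (bigD1 i) //= -[X in X <= _]addr0 expr2.
apply: lerD => //; apply: sumr_ge0 => j _.
by rewrite [H j i]gram_adjoint mul_conjC_ge0.
Qed.

(* Expressing the rows of V in an orthonormal basis of their span replaces
   V V^* by a unitarily equivalent Gram matrix of size rank V. *)
Lemma sqr_mxtrace_gram_le_rank (m n : nat) (V : 'M[C]_(m, n)) :
  \tr (V *m V^t*) ^+ 2 <= (\rank V)%:R * \tr ((V *m V^t*) *m (V *m V^t*)).
Proof.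
set S := schmidt (row_base V).
have S_unitary : S \is unitarymx := schmidt_unitarymx _ (rank_leq_col V).
have /submxP[D VE] : (V <= S)%MS.
  by rewrite /S (eqmx_schmidt_free (row_base_free V)) eq_row_base.
have VSS : V *m S^t* *m S = V by rewrite [X in X *m _ *m _]VE mulmxtVK.
set a := V *m S^t*.
have gramE : V *m V^t* = a *m a^t* by rewrite /a trmxC_mul trmxCK mulmxA VSS.
have -> : \tr (V *m V^t*) = \tr (a^t* *m a^t*^t*).
  by rewrite gramE trmxCK mxtrace_mulC.
have -> : \tr ((V *m V^t*) *m (V *m V^t*))
    = \tr ((a^t* *m a^t*^t*) *m (a^t* *m a^t*^t*)).
  by rewrite gramE trmxCK mulmxA mxtrace_mulC !mulmxA.
exact: sqr_mxtrace_gram_le_dim.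
Qed.
End GramMatrix.

Definition ffun4 {I : finType} (x0 x1 x2 x3 : I) : {ffun 'I_4 -> I} :=
  [ffun i : 'I_4 => if val i == 0%N then x0 else if val i == 1%N then x1
                    else if val i == 2%N then x2 else x3].

Lemma sum_ffun4 (V : nmodType) (I : finType) (F : {ffun 'I_4 -> I} -> V) :
  \sum_f F f = \sum_x0 \sum_x1 \sum_x2 \sum_x3 F (ffun4 x0 x1 x2 x3).
Proof.
pose tuple4 (f : {ffun 'I_4 -> I}) :=
  (f (o4 0 isT), f (o4 1 isT), f (o4 2 isT), f (o4 3 isT)).
pose untuple4 (u : I * I * I * I) := ffun4 u.1.1.1 u.1.1.2 u.1.2 u.2.
rewrite (reindex untuple4) /=; first by rewrite !pair_bigA.
exists tuple4 => [[[[x0 x1] x2] x3] _|f _]; first by rewrite /tuple4 !ffunE.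
by apply/ffunP => -[[|[|[|[|k]]]] lt_k4] //; rewrite ffunE //=;
  congr (f _); apply/val_inj.
Qed.

Lemma prod_ord4 (V : comPzSemiRingType) (f : 'I_4 -> V) :
  \prod_(i < 4) f i = f (o4 0 isT) * f (o4 1 isT) * f (o4 2 isT) * f (o4 3 isT).
Proof.
rewrite !big_ord_recl big_ord0 mulr1 !mulrA.
by congr (f _ * f _ * f _ * f _); apply/val_inj.
Qed.

Lemma pi1E : [/\ pi1 (o4 0 isT) = o4 1 isT, pi1 (o4 1 isT) = o4 0 isT,
  pi1 (o4 2 isT) = o4 3 isT & pi1 (o4 3 isT) = o4 2 isT].
Proof. by split; apply/val_inj; rewrite /pi1 permM !permE. Qed.

Lemma pi2E : [/\ pi2 (o4 0 isT) = o4 2 isT, pi2 (o4 1 isT) = o4 3 isT,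
  pi2 (o4 2 isT) = o4 0 isT & pi2 (o4 3 isT) = o4 1 isT].
Proof. by split; apply/val_inj; rewrite /pi2 permM !permE. Qed.

Lemma pi3E : [/\ pi3 (o4 0 isT) = o4 3 isT, pi3 (o4 1 isT) = o4 2 isT,
  pi3 (o4 2 isT) = o4 1 isT & pi3 (o4 3 isT) = o4 0 isT].
Proof. by split; apply/val_inj; rewrite /pi3 permM !permE. Qed.

Lemma sum_enum_val (V : nmodType) (T : finType) (F : T -> V) :
  \sum_(i < #|{: T}|) F (enum_val i) = \sum_(x : T) F x.
Proof. by rewrite -(big_enum_val F). Qed.

Lemma sum_pair (V : nmodType) (I J : finType) (F : I * J -> V) :
  \sum_x F x = \sum_i \sum_j F (i, j).
Proof. by rewrite pair_bigA; apply: eq_bigr => -[]. Qed.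

Section Contraction.
Local Open Scope sesquilinear_scope.
Variables (R : realType) (dB dC : nat).
Local Notation C := R[i].

Definition contrB {dA} (Psi : state R dA dB dC)
    (aa : 'I_dA * 'I_dA) (cc : 'I_dC * 'I_dC) : C :=
  \sum_b conjc (Psi aa.1 b cc.1) * Psi aa.2 b cc.2.

Definition contrB_mx {dA} (Psi : state R dA dB dC) :
    'M[C]_(#|{: 'I_dA * 'I_dA}|, #|{: 'I_dC * 'I_dC}|) :=
  \matrix_(p, q) contrB Psi (enum_val p) (enum_val q).

Lemma contrB_mx_factor dA r (beta : 'M[C]_(dA, r))
    (Psi : state R dA dB dC) (Phi : state R r dB dC) :
    (forall a b c, Psi a b c = \sum_s beta a s * Phi s b c) ->
  contrB_mx Psi =
    \matrix_(p, u) (conjc (beta (enum_val p).1 (enum_val u).1) *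
                    beta (enum_val p).2 (enum_val u).2) *m contrB_mx Phi.
Proof.
move=> PsiE; apply/matrixP => p q; rewrite !mxE /contrB.
under [RHS]eq_bigr => u _ do rewrite !mxE.
rewrite (@sum_enum_val _ _ (fun u : 'I_r * 'I_r =>
  conjc (beta (enum_val p).1 u.1) * beta (enum_val p).2 u.2 *
  \sum_b conjc (Phi u.1 b (enum_val q).1) * Phi u.2 b (enum_val q).2)) sum_pair.
under eq_bigr => b _ do rewrite !PsiE rmorph_sum big_distrlr /=.
rewrite exchange_big; apply: eq_bigr => s _.
rewrite exchange_big; apply: eq_bigr => t _.
rewrite big_distrr; apply: eq_bigr => b _.
by rewrite rmorphM /=; ring.
Qed.

Definition psiA_mx {dA} (Psi : state R dA dB dC) : 'M[C]_(dA, #|{: 'I_dB * 'I_dC}|) :=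
  \matrix_(a, q) Psi a (enum_val q).1 (enum_val q).2.

Lemma rhoA_gram dA (Psi : state R dA dB dC) :
  rhoA Psi = psiA_mx Psi *m (psiA_mx Psi)^t*.
Proof.
apply/matrixP => a a'; rewrite !mxE.
under [RHS]eq_bigr => q _ do rewrite !mxE.
by rewrite (@sum_enum_val _ _ (fun q => Psi a q.1 q.2 * conjc (Psi a' q.1 q.2))) sum_pair.
Qed.

(* The A-rows of Psi span a space of dimension rank rho_A, so contrB_mx Psi
   factors through a space of dimension (rank rho_A)^2. *)
Lemma mxrank_contrB_mx_le dA (Psi : state R dA dB dC) :
  (\rank (contrB_mx Psi) <= \rank (rhoA Psi) ^ 2)%N.
Proof.
rewrite rhoA_gram mxrank_gram; set P := psiA_mx Psi; set E := row_base P.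
pose Phi : state R (\rank P) dB dC := fun s b c => E s (enum_rank (b, c)).
have PE : P = P *m pinvmx E *m E by rewrite mulmxKpV // eq_row_base.
have PsiE a b c : Psi a b c = \sum_s (P *m pinvmx E) a s * Phi s b c.
  move/(congr1 (fun M : 'M[C]_(dA, _) => M a (enum_rank (b, c)))): PE.
  by rewrite [in X in X = _]mxE enum_rankK mxE.
rewrite (contrB_mx_factor PsiE) (leq_trans (mxrankM_maxr _ _)) //.
by rewrite (leq_trans (rank_leq_row _)) // card_prod card_ord.
Qed.

Section ContractionGram.
Variables (dA : nat) (Psi : state R dA dB dC).
Local Notation V := (contrB_mx Psi).

Lemma Z_expand : Z Psi =
  \sum_a0 \sum_a1 \sum_a2 \sum_a3 \sum_b0 \sum_b1 \sum_b2 \sum_b3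
  \sum_c0 \sum_c1 \sum_c2 \sum_c3
   (conjc (Psi a0 b0 c0) * Psi a1 b2 c3) * (conjc (Psi a1 b1 c1) * Psi a0 b3 c2) *
   (conjc (Psi a2 b2 c2) * Psi a3 b0 c1) * (conjc (Psi a3 b3 c3) * Psi a2 b1 c0).
Proof.
rewrite /Z /Zperm sum_ffun4; do 4 apply: eq_bigr => ? _.
rewrite sum_ffun4; do 4 apply: eq_bigr => ? _.
rewrite sum_ffun4; do 4 apply: eq_bigr => ? _.
rewrite prod_ord4.
have [-> -> -> ->] := pi1E; have [-> -> -> ->] := pi2E; have [-> -> -> ->] := pi3E.
by rewrite !ffunE.
Qed.

Definition contrB_gram (aa aa' : 'I_dA * 'I_dA) : C :=
  \sum_cc contrB Psi aa cc * conjc (contrB Psi aa' cc).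

Lemma gram_contrB_mxE p q :
  (V *m V^t*) p q = contrB_gram (enum_val p) (enum_val q).
Proof.
rewrite mxE /contrB_gram -[RHS]sum_enum_val.
by apply: eq_bigr => k _; rewrite !mxE.
Qed.

Lemma contrB_gramE aa aa' : contrB_gram aa aa' =
  \sum_c \sum_c' \sum_b \sum_b' (conjc (Psi aa.1 b c) * Psi aa.2 b c') *
                                conjc (conjc (Psi aa'.1 b' c) * Psi aa'.2 b' c').
Proof.
rewrite /contrB_gram sum_pair; apply: eq_bigr => c _; apply: eq_bigr => c' _.
by rewrite /contrB rmorph_sum big_distrlr.
Qed.

Lemma mxtrace_gram_contrB_sqr : \tr ((V *m V^t*) *m (V *m V^t*)) =
  \sum_a0 \sum_a1 \sum_a2 \sum_a3
    contrB_gram (a1, a2) (a3, a0) * contrB_gram (a3, a0) (a1, a2).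
Proof.
rewrite /mxtrace; under eq_bigr => p _ do rewrite mxE.
under eq_bigr => p _ do under eq_bigr => q _ do rewrite !gram_contrB_mxE.
rewrite (@sum_enum_val _ _ (fun x => \sum_q contrB_gram x (enum_val q) *
                                                contrB_gram (enum_val q) x)).
under eq_bigr => x _ do rewrite (@sum_enum_val _ _ (fun y => contrB_gram x y *
                                                           contrB_gram y x)) sum_pair.
rewrite sum_pair [RHS]exchange_big; apply: eq_bigr => a1 _.
rewrite [RHS]exchange_big; apply: eq_bigr => a2 _.
by rewrite [RHS]exchange_big.
Qed.

Lemma Z_summandE a0 a1 a2 a3 :
  \sum_b0 \sum_b1 \sum_b2 \sum_b3 \sum_c0 \sum_c1 \sum_c2 \sum_c3
   (conjc (Psi a0 b0 c0) * Psi a1 b2 c3) * (conjc (Psi a1 b1 c1) * Psi a0 b3 c2) *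
   (conjc (Psi a2 b2 c2) * Psi a3 b0 c1) * (conjc (Psi a3 b3 c3) * Psi a2 b1 c0)
  = contrB_gram (a1, a2) (a3, a0) * contrB_gram (a3, a0) (a1, a2).
Proof.
rewrite !contrB_gramE !pair_bigA big_distrlr pair_bigA /=.
pose perm_idx (w : 'I_dC * 'I_dC * 'I_dB * 'I_dB * ('I_dC * 'I_dC * 'I_dB * 'I_dB)) :=
  let: (c1, c0, b1, b0, (c3, c2, b3, b2)) := w in (b0, b1, b2, b3, c0, c1, c2, c3).
pose unperm_idx (l : 'I_dB * 'I_dB * 'I_dB * 'I_dB * 'I_dC * 'I_dC * 'I_dC * 'I_dC) :=
  let: (b0, b1, b2, b3, c0, c1, c2, c3) := l in (c1, c0, b1, b0, (c3, c2, b3, b2)).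
rewrite (reindex perm_idx); last first.
  by exists unperm_idx => [[[[[c1 c0] b1] b0] [[[c3 c2] b3] b2]]|
                           [[[[[[[b0 b1] b2] b3] c0] c1] c2] c3]].
apply: eq_bigr => -[[[[c1 c0] b1] b0] [[[c3 c2] b3] b2]] _ /=.
by rewrite !rmorphM /= !conjcK; ring.
Qed.

Lemma Z_gram : Z Psi = \tr ((V *m V^t*) *m (V *m V^t*)).
Proof.
rewrite Z_expand mxtrace_gram_contrB_sqr; do 4 apply: eq_bigr => ? _.
exact: Z_summandE.
Qed.

Lemma mxtrace_rhoB_sqr : \tr (rhoB Psi *m rhoB Psi) = \tr (V *m V^t*).
Proof.
rewrite [LHS]/mxtrace; under eq_bigr => b _ do rewrite mxE.
have rhoB2E b b' : rhoB Psi b b' * rhoB Psi b' b =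
  \sum_(u : 'I_dA * 'I_dC) \sum_(v : 'I_dA * 'I_dC)
    (Psi u.1 b u.2 * conjc (Psi u.1 b' u.2)) * (Psi v.1 b' v.2 * conjc (Psi v.1 b v.2)).
  by rewrite -big_distrlr /rhoB !mxE !pair_bigA.
under eq_bigr => b _ do under eq_bigr => b' _ do rewrite rhoB2E.
rewrite /mxtrace; under [RHS]eq_bigr => p _ do rewrite gram_contrB_mxE.
rewrite (@sum_enum_val _ _ (fun x => contrB_gram x x)) sum_pair.
under [RHS]eq_bigr => a _ do under eq_bigr => a' _ do rewrite contrB_gramE.
rewrite !pair_bigA /=.
pose perm_idx (w : 'I_dA * 'I_dA * 'I_dC * 'I_dC * 'I_dB * 'I_dB) :=
  let: (a, a', c, c', b, b') := w in (b', b, (a, c), (a', c')).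
pose unperm_idx (l : 'I_dB * 'I_dB * ('I_dA * 'I_dC) * ('I_dA * 'I_dC)) :=
  let: (b', b, (a, c), (a', c')) := l in (a, a', c, c', b, b').
rewrite (reindex perm_idx); last first.
  by exists unperm_idx => [[[[[[a a'] c] c'] b] b']|[[[b' b] [a c]] [a' c']]].
apply: eq_bigr => -[[[[[a a'] c] c'] b] b'] _ /=.
by rewrite !rmorphM /= !conjcK; ring.
Qed.

Lemma contrB_mx_neq0 : normalized Psi -> V != 0.
Proof.
move=> norm1; apply/eqP => V0; move/eqP: norm1; apply/negP.
have -> : \sum_a \sum_b \sum_c Psi a b c * conjc (Psi a b c) =
          \sum_a \sum_c contrB Psi (a, a) (c, c).
  apply: eq_bigr => a _; rewrite exchange_big.
  by do 2 apply: eq_bigr => ? _; rewrite mulrC.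
rewrite big1 ?(eq_sym 0) ?oner_eq0 // => a _; rewrite big1 // => c _.
move/(congr1 (fun M : 'M[C]_(_, _) => M (enum_rank (a, a)) (enum_rank (c, c)))): V0.
by rewrite !mxE !enum_rankK.
Qed.

Lemma mxtrace_gram_contrB_gt0 : normalized Psi -> 0 < \tr (V *m V^t*).
Proof.
move=> norm1.
by rewrite lt_def mxtrace_gram_eq0 (contrB_mx_neq0 norm1) mxtrace_gram_ge0.
Qed.

Lemma sqr_Re_mxtrace_rhoB_le :
  complex.Re (\tr (rhoB Psi *m rhoB Psi)) ^+ 2 <=
    (\rank (rhoA Psi))%:R ^+ 2 * complex.Re (Z Psi).
Proof.
have le_C : \tr (V *m V^t*) ^+ 2 <= (\rank (rhoA Psi))%:R ^+ 2 * Z Psi.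
  apply: le_trans (sqr_mxtrace_gram_le_rank V) _; rewrite Z_gram.
  apply: ler_wpM2r; first exact: mxtrace_gram_sqr_ge0.
  by rewrite -natrX ler_nat mxrank_contrB_mx_le.
have trR := RRe_real (ger0_real (mxtrace_gram_ge0 V)).
have ZR := RRe_real (ger0_real (mxtrace_gram_sqr_ge0 V)); rewrite -Z_gram in ZR.
rewrite -trR -ZR -rmorphXn -(rmorph_nat (real_complex R)) -rmorphXn -rmorphM
  lecR in le_C.
by rewrite mxtrace_rhoB_sqr.
Qed.

Lemma Re_mxtrace_rhoB_sqr_gt0 :
  normalized Psi -> 0 < complex.Re (\tr (rhoB Psi *m rhoB Psi)).
Proof.
by move/mxtrace_gram_contrB_gt0; rewrite mxtrace_rhoB_sqr ltcE => /andP[].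
Qed.

End ContractionGram.
End Contraction.

Lemma neg_half_ln_le (R : realType) (n : nat) (t z : R) :
  0 < t -> t ^+ 2 <= n%:R ^+ 2 * z -> - (1 / 2) * ln z <= ln n%:R - ln t.
Proof.
move=> t_gt0 le_t2.
(* lra fails to identify the ln atoms produced by lnXn, so abstract them. *)
have halve (a b c : R) : a + a <= b + b + c -> - (1 / 2) * c <= b - a by lra.
have nz_gt0 : 0 < n%:R ^+ 2 * z := lt_le_trans (exprn_gt0 2 t_gt0) le_t2.
have n_gt0 : 0 < n%:R :> R.
  rewrite ltr0n lt0n; apply: contraTneq nz_gt0 => ->.
  by rewrite mulr0n expr0n mul0r ltxx.
have z_gt0 : 0 < z by rewrite -(pmulr_rgt0 _ (exprn_gt0 2 n_gt0)).
move: le_t2; rewrite -ler_ln ?posrE ?exprn_gt0 //.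
by rewrite lnM ?posrE ?exprn_gt0 // !lnXn // !mulr2n => /halve.
Qed.

Theorem mainTheorem4 (R : realType) (dA dB dC : nat) (Psi : state R dA dB dC) :
  normalized Psi -> G Psi <= S0A Psi + S2B Psi.
Proof.
move=> norm1; apply: neg_half_ln_le (sqr_Re_mxtrace_rhoB_le Psi).
exact: Re_mxtrace_rhoB_sqr_gt0.
Qed.
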